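(* In every instance of the Balancing with Conflicts game with $m=2$ machines, every state $\vec s^*$ minimizing the social cost is a strong Nash equilibrium. In particular, a strong Nash equilibrium always exists and the strong price of stability equals $1$.
   Context: An instance of the Balancing with Conflicts (BwC) game consists of: - players $N=\{1,\dots,n\}$; - machines $M=\{1,\dots,m\}$; - a simple undirected graph $G=(N,E)$. A state is $\vec s\in M^n$, with $X_k(\vec s)=\{i:s_i=k\}$ and $x_k(\vec s)=|X_k(\vec s)|$. For $X\subseteq N$, $e(X)$ is the number of edges with both endpoints in $X$, and $e(\{i\},X)$ is the number of neighbours of $i$ in $X$. The cost of player $i$ with $s_i=k$ is $c_i(\vec s)=x_k(\vec s)+e(\{i\},X_k(\vec s))$. The social cost is $$c(\vec s)=\sum_ic_i(\vec s)=\sum_k\big(x_k(\vec s)^2+2e(X_k(\vec s))\big).$$ A state $\vec s$ is a strong Nash equilibrium if for every nonempty coalition $C\subseteq N$ and every joint deviation $\vec s_C'\in M^C$, some $i\in C$ has $c_i(\vec s)\le c_i(\vec s_C',\vec s_{-C})$. The strong price of stability is the minimum over strong Nash equilibria $\vec s$ of $c(\vec s)/\min_{\vec t}c(\vec t)$. *)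

From mathcomp Require Import all_boot all_order.
Set Implicit Arguments. Unset Strict Implicit. Unset Printing Implicit Defensive.

(* Players are 'I_n, machines are 'I_m, a state is a finite function
   'I_n -> 'I_m.  The conflict graph G is a simple undirected graph given by a
   symmetric irreflexive relation on players. *)
Definition simple_graph (n : nat) (G : rel 'I_n) : Prop :=
  (forall i, ~~ G i i) /\ (forall i j, G i j = G j i).

Definition state (n m : nat) := {ffun 'I_n -> 'I_m}.

Definition load_set n m (s : state n m) (k : 'I_m) : {set 'I_n} :=
  [set i | s i == k].

Definition load n m (s : state n m) (k : 'I_m) : nat := #|load_set s k|.

Definition nbrs_in n (G : rel 'I_n) (i : 'I_n) (X : {set 'I_n}) : nat :=
  #|[set j in X | G i j]|.

Definition pcost n m (G : rel 'I_n) (s : state n m) (i : 'I_n) : nat :=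
  load s (s i) + nbrs_in G i (load_set s (s i)).

Definition scost n m (G : rel 'I_n) (s : state n m) : nat :=
  \sum_(i < n) pcost G s i.

Definition deviate n m (s : state n m) (C : {set 'I_n}) (t : state n m)
  : state n m := [ffun i => if i \in C then t i else s i].

Definition strongNE n m (G : rel 'I_n) (s : state n m) : Prop :=
  forall (C : {set 'I_n}) (t : state n m), C != set0 ->
    exists2 i, i \in C & pcost G s i <= pcost G (deviate s C t) i.

Definition social_optimum n m (G : rel 'I_n) (s : state n m) : Prop :=
  forall t : state n m, scost G s <= scost G t.

From mathcomp Require Import all_boot all_order.
From mathcomp Require Import zify.
Set Implicit Arguments. Unset Strict Implicit. Unset Printing Implicit Defensive.

(* With two machines the social cost behaves like a potential for coalitions.
   Write w(i,j) = 1 + [G i j], so that c_i(s) = sum_j [s_i = s_j] w(i,j).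
   For a deviation s -> s' with set of movers D = {i | s_i <> s'_i}, a pair
   (i,j) changes from "same machine" to "different machines" (or back)
   exactly when one of i, j moves, since there are only two machines.  Summing
   this over all pairs and using the symmetry of w gives the exchange identity
     c(s') + 2 sum_{i in D} c_i(s) = c(s) + 2 sum_{i in D} c_i(s').
   Every mover belongs to the deviating coalition C; if every member of C
   strictly gained, the movers would gain strictly in total (there is a mover,
   otherwise s' = s), hence c(s') < c(s), contradicting optimality of s. *)

Lemma card_indicator (I : finType) (A : {set I}) : #|A| = \sum_j (j \in A : nat).
Proof. by rewrite -sum1_card big_mkcond /=; apply: eq_bigr => j _; case: (j \in A). Qed.

Lemma pcost_pairsum n m (G : rel 'I_n) (s : state n m) (i : 'I_n) :
  pcost G s i = \sum_j (s i == s j) * (1 + G i j).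
Proof.
rewrite /pcost /nbrs_in /load !card_indicator -big_split /=.
by apply: eq_bigr => j _; rewrite !inE eq_sym; case: (s i == s j); case: (G i j).
Qed.

Lemma sum_symmetrize (I : finType) (d : I -> nat) (F : I -> I -> nat) :
  (forall i j, F i j = F j i) ->
  2 * \sum_i d i * \sum_j F i j = \sum_i \sum_j (d i + d j) * F i j.
Proof.
move=> F_sym.
have split_sum : \sum_i \sum_j (d i + d j) * F i j =
    \sum_i \sum_j d i * F i j + \sum_i \sum_j d j * F i j.
  by rewrite -big_split; apply: eq_bigr => i _; rewrite -big_split;
     apply: eq_bigr => j _; rewrite mulnDl.
have swap : \sum_i \sum_j d j * F i j = \sum_i \sum_j d i * F i j.
  by rewrite exchange_big; apply: eq_bigr => i _; apply: eq_bigr => j _; rewrite F_sym.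
rewrite split_sum swap addnn -mul2n; congr (2 * _).
by apply: eq_bigr => i _; rewrite big_distrr.
Qed.

(* Two-machine pair identity: with old positions a, b and new positions c, d,
   the "same machine" indicator flips exactly when one of the two players
   moves; in equation form, weighted by the number of movers in the pair. *)
Lemma two_machine_pair (a b c d : 'I_2) :
  ((c == d) : nat) + ((a != c) + (b != d)) * (a == b) =
  (a == b) + ((a != c) + (b != d)) * (c == d).
Proof. by move: a b c d => [[|[|?]] ?] [[|[|?]] ?] [[|[|?]] ?] [[|[|?]] ?]. Qed.

Lemma exchange_identity n (G : rel 'I_n) (s s' : state n 2) :
  (forall i j, G i j = G j i) ->
  scost G s' + 2 * \sum_i (s i != s' i) * pcost G s i =
  scost G s + 2 * \sum_i (s i != s' i) * pcost G s' i.
Proof.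
move=> G_sym.
have kernel_sym (t : state n 2) i j :
    (t i == t j) * (1 + G i j) = (t j == t i) * (1 + G j i).
  by rewrite eq_sym G_sym.
have weighted (t : state n 2) i :
    (s i != s' i) * pcost G t i = (s i != s' i) * \sum_j (t i == t j) * (1 + G i j).
  by rewrite pcost_pairsum.
rewrite /scost !(eq_bigr _ (fun i _ => pcost_pairsum G _ i)).
rewrite !(eq_bigr _ (fun i _ => weighted _ i)).
rewrite !(sum_symmetrize (fun i => (s i != s' i) : nat)) ?kernel_sym //.
rewrite -!big_split; apply: eq_bigr => i _; rewrite -!big_split /=.
by apply: eq_bigr => j _; rewrite !mulnA -!mulnDl two_machine_pair.
Qed.

Lemma mover_in_coalition n m (s t : state n m) (C : {set 'I_n}) (i : 'I_n) :
  s i != deviate s C t i -> i \in C.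
Proof. by rewrite ffunE; case: (i \in C); rewrite ?eqxx. Qed.

Lemma ltn_sum_indicator (I : finType) (P : pred I) (f g : I -> nat) (i0 : I) :
  P i0 -> (forall i, P i -> f i < g i) ->
  \sum_i P i * f i < \sum_i P i * g i.
Proof.
move=> Pi0 lt_fg.
rewrite (bigD1 i0) //= [X in _ < X](bigD1 i0) //= Pi0 !mul1n -addSn.
apply: leq_add; first exact: lt_fg.
apply: leq_sum => i _; case: (boolP (P i)) => [Pi | _]; last by [].
by rewrite !mul1n ltnW ?lt_fg.
Qed.

Lemma coalition_gain n (G : rel 'I_n) (s t : state n 2) (C : {set 'I_n}) :
  C != set0 ->
  (forall i, i \in C -> pcost G (deviate s C t) i < pcost G s i) ->
  \sum_i (s i != deviate s C t i) * pcost G (deviate s C t) i <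
  \sum_i (s i != deviate s C t i) * pcost G s i.
Proof.
move=> /set0Pn [i1 i1C] gain; set s' := deviate s C t.
have [/existsP [i0 moved] | /existsPn unmoved] := boolP [exists i, s i != s' i].
  apply: (ltn_sum_indicator (P := fun i => s i != s' i) moved) => i /mover_in_coalition.
  exact: gain.
have same : s' = s by apply/ffunP => i; move/negPn/eqP: (unmoved i).
by move: (gain i1 i1C); rewrite -/s' same ltnn.
Qed.

Lemma optimum_strongNE n (G : rel 'I_n) (s : state n 2) :
  (forall i j, G i j = G j i) -> social_optimum G s -> strongNE G s.
Proof.
move=> G_sym opt C t C0.
have [/exists_inP [i iC le] | /exists_inPn no_le] :=
  boolP [exists i in C, pcost G s i <= pcost G (deviate s C t) i].
  by exists i.
have gain i : i \in C -> pcost G (deviate s C t) i < pcost G s i.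
  by move=> iC; rewrite ltnNge no_le.
have movers_gain := coalition_gain C0 gain.
have exchange := exchange_identity s (deviate s C t) G_sym.
have := opt (deviate s C t).
(* Abstract the costs to atoms: the contradiction is linear arithmetic. *)
move: movers_gain exchange; set s' := deviate s C t.
set new_cost := scost G s'; set old_cost := scost G s.
set new_movers := \sum_i _ * pcost G s' i; set old_movers := \sum_i _ * pcost G s i.
lia.
Qed.

Lemma social_optimum_exists n m (G : rel 'I_n) (s0 : state n m) :
  exists s : state n m, social_optimum G s.
Proof.
by case: (@arg_minnP _ s0 xpredT (scost G) erefl) => s _ smin; exists s => t; apply: smin.
Qed.

Theorem theorem13 (n : nat) (G : rel 'I_n) :
  simple_graph G ->
  (forall s : state n 2, social_optimum G s -> strongNE G s) /\
  (exists s : state n 2, strongNE G s /\ social_optimum G s).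
Proof.
case=> _ G_sym.
have NE s : social_optimum G s -> strongNE G s := optimum_strongNE G_sym.
split=> //.
have [s opt] := social_optimum_exists G [ffun _ => ord0 : 'I_2].
by exists s; split; first exact: NE.
Qed.
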